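(* As operators on the tensor product of any three finite-dimensional spin representations of $U_q(\mathfrak{su}_2)$, $$Q_{23}:=1\otimes\Delta(Q)=\mathrm{Tr}_a\big(L^+_{a1}L^+_{a2}L^+_{a3}L^-_{a3}L^-_{a2}(L^+_{a1})^{-1}M_a\big),$$ where $Q=(q-q^{-1})^2FE+q^{2H+1}+q^{-2H-1}$.
   Context: $q$ generic complex, $U_q(\mathfrak{su}_2)$ generated by $E,F,q^H$ with $q^HE=qEq^H$, $q^HF=q^{-1}Fq^H$, $[E,F]=(q^{2H}-q^{-2H})/(q-q^{-1})$; coproduct $\Delta(E)=E\otimes q^{-H}+q^H\otimes E$, $\Delta(F)=F\otimes q^{-H}+q^H\otimes F$, $\Delta(q^H)=q^H\otimes q^H$. Auxiliary space $a\cong\mathbb{C}^2$ traced with $\mathrm{Tr}_a$. $L^-=\begin{pmatrix}q^H&0\\ \frac{q-q^{-1}}{q^{1/2}}E&q^{-H}\end{pmatrix}$, $L^+=\begin{pmatrix}q^H&\frac{q-q^{-1}}{q^{1/2}}F\\0&q^{-H}\end{pmatrix}$; $L^\pm_{ai}$ is the matrix on space $a$ with entries in the $i$-th tensor factor; $M_a=\mathrm{diag}(q,q^{-1})$ on space $a$. *)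

From HB Require Import structures.
From mathcomp Require Import all_boot all_order all_algebra.
From mathcomp Require Import mxtens.
Set Implicit Arguments. Unset Strict Implicit. Unset Printing Implicit Defensive.
Import Order.TTheory GRing.Theory Num.Theory.
Local Open Scope ring_scope.

(* Throughout, p plays the role of q^{1/2}; the deformation parameter is q = p^2. *)
Section Spin.
Variable C : numClosedFieldType.
Variable p : C.

Definition qpar : C := p ^+ 2.

Definition qint (a : nat) : C := (qpar ^+ a - qpar ^- a) / (qpar - qpar^-1).

(* Spin representation of spin j = n/2 on C^(n+1), basis e_k (k = 0..n)
   with H e_k = (n/2 - k) e_k, so q^H e_k = p^(n - 2k) e_k,
   F e_k = e_(k+1), E e_k = [k][n-k+1] e_(k-1). *)
Definition spinK (n : nat) : 'M[C]_(n.+1) :=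
  \matrix_(i, j) ((i == j)%:R * p ^ (n%:Z - 2 * (i : nat)%:Z)).
Definition spinE (n : nat) : 'M[C]_(n.+1) :=
  \matrix_(i, j) (((i : nat).+1 == j)%:R * (qint (i.+1) * qint (n - i))).
Definition spinF (n : nat) : 'M[C]_(n.+1) :=
  \matrix_(i, j) ((i : nat) == j.+1)%:R.

Variables n1 n2 n3 : nat.
Local Notation N := (n1.+1 * n2.+1 * n3.+1)%N.

Definition on1 (X : 'M[C]_(n1.+1)) : 'M[C]_N := X *t 1%:M *t 1%:M.
Definition on2 (X : 'M[C]_(n2.+1)) : 'M[C]_N := 1%:M *t X *t 1%:M.
Definition on3 (X : 'M[C]_(n3.+1)) : 'M[C]_N := 1%:M *t 1%:M *t X.

Definition K_ (i : nat) : 'M[C]_N :=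
  if i == 1%N then on1 (spinK n1) else if i == 2%N then on2 (spinK n2) else on3 (spinK n3).
Definition E_ (i : nat) : 'M[C]_N :=
  if i == 1%N then on1 (spinE n1) else if i == 2%N then on2 (spinE n2) else on3 (spinE n3).
Definition F_ (i : nat) : 'M[C]_N :=
  if i == 1%N then on1 (spinF n1) else if i == 2%N then on2 (spinF n2) else on3 (spinF n3).

(* 1 (x) Delta(X) for X = E, F, q^H, using
   Delta(E) = E (x) q^-H + q^H (x) E, Delta(F) = F (x) q^-H + q^H (x) F,
   Delta(q^H) = q^H (x) q^H *)
Definition E23 : 'M[C]_N := E_ 2 *m invmx (K_ 3) + K_ 2 *m E_ 3.
Definition F23 : 'M[C]_N := F_ 2 *m invmx (K_ 3) + K_ 2 *m F_ 3.
Definition K23 : 'M[C]_N := K_ 2 *m K_ 3.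

Definition Q23 : 'M[C]_N :=
  (qpar - qpar^-1) ^+ 2 *: (F23 *m E23)
  + qpar *: (K23 *m K23) + qpar^-1 *: invmx (K23 *m K23).

(* Auxiliary space a = C^2: an operator on a (x) (V1 (x) V2 (x) V3) is a
   2x2 block matrix whose (alpha,beta) block is the (alpha,beta) entry. *)
Definition Lplus (i : nat) : 'M[C]_(N + N) :=
  block_mx (K_ i) (((qpar - qpar^-1) / p) *: F_ i) 0 (invmx (K_ i)).
Definition Lminus (i : nat) : 'M[C]_(N + N) :=
  block_mx (K_ i) 0 (((qpar - qpar^-1) / p) *: E_ i) (invmx (K_ i)).
Definition Ma : 'M[C]_(N + N) := block_mx (qpar%:M) 0 0 (qpar^-1%:M).

Definition Tr_a (X : 'M[C]_(N + N)) : 'M[C]_N := ulsubmx X + drsubmx X.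

End Spin.

(* Write c = (q - q^-1)/q^(1/2).  Conjugating a 2x2 block operator Z by the
   upper triangular L = [[K, cF], [0, K^-1]] does not change its q-trace
   Tr_a(Z M_a) = q Z_11 + q^-1 Z_22, provided K and F commute with the blocks
   of Z: the contributions of the corner cF to the two diagonal blocks cancel
   because of the weight relation F K = q K F.  Taking L = L^+_{a1} and
   Z = L^+_{a2} L^+_{a3} L^-_{a3} L^-_{a2}, which acts on sites 2 and 3 only,
   reduces the right-hand side to q Z_11 + q^-1 Z_22.  As Z is the product of
   an upper and a lower triangular block matrix,
   Z_11 = Delta(q^H)^2 + c^2 Delta(F) Delta(E) and Z_22 = Delta(q^H)^-2, and
   q c^2 = (q - q^-1)^2 gives Q_23. *)

From HB Require Import structures.
From mathcomp Require Import all_boot all_order all_algebra.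
From mathcomp Require Import mxtens zify.
Set Implicit Arguments. Unset Strict Implicit. Unset Printing Implicit Defensive.
Import Order.TTheory GRing.Theory Num.Theory.
Local Open Scope ring_scope.

Section MatrixFacts.
Variables (R : comUnitRingType) (n : nat).
Implicit Types A B C D X : 'M[R]_n.

Lemma mulmx1_invmx A B : A *m B = 1%:M -> invmx A = B.
Proof.
move=> AB; have [uA _] := mulmx1_unit AB.
by rewrite -[invmx A]mulmx1 -AB mulmxA mulVmx // mul1mx.
Qed.

Lemma invmxM A B : A \in unitmx -> B \in unitmx ->
  invmx (A *m B) = invmx B *m invmx A.
Proof.
move=> uA uB; apply: mulmx1_invmx.
by rewrite mulmxA mulmxK // mulmxV.
Qed.

Lemma comm_mx_invmx A B : A \in unitmx -> comm_mx A B -> comm_mx (invmx A) B.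
Proof.
move=> uA AB; rewrite /comm_mx -{1}(mulmxK uA B) -AB !mulmxA.
by rewrite mulVmx // mul1mx.
Qed.

Lemma comm_mxZ a A B : comm_mx A B -> comm_mx A (a *: B).
Proof. by rewrite /comm_mx -scalemxAr -scalemxAl => ->. Qed.

Lemma comm_mx_block_diag X A B C D :
  comm_mx (block_mx X 0 0 X) (block_mx A B C D) <->
  [/\ comm_mx X A, comm_mx X B, comm_mx X C & comm_mx X D].
Proof.
rewrite /comm_mx !mulmx_block !mulmx0 !mul0mx !addr0 !add0r.
by split=> [/eq_block_mx[] | [-> -> -> ->]].
Qed.

End MatrixFacts.

Section BlockTriangular.
Variables (R : pzRingType) (n : nat).
Implicit Types A B C D : 'M[R]_n.

Lemma mulmx_block_upper A B D A' B' D' :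
  block_mx A B 0 D *m block_mx A' B' 0 D'
  = block_mx (A *m A') (A *m B' + B *m D') 0 (D *m D').
Proof. by rewrite mulmx_block !mulmx0 !mul0mx !addr0 add0r. Qed.

Lemma mulmx_block_lower A C D A' C' D' :
  block_mx A 0 C D *m block_mx A' 0 C' D'
  = block_mx (A *m A') 0 (C *m A' + D *m C') (D *m D').
Proof. by rewrite mulmx_block !mulmx0 !mul0mx !addr0 add0r. Qed.

Lemma ulsubmx_upper_lower A B D A' C' D' :
  ulsubmx (block_mx A B 0 D *m block_mx A' 0 C' D') = A *m A' + B *m C'.
Proof. by rewrite mulmx_block block_mxKul. Qed.

Lemma drsubmx_upper_lower A B D A' C' D' :
  drsubmx (block_mx A B 0 D *m block_mx A' 0 C' D') = D *m D'.
Proof. by rewrite mulmx_block block_mxKdr mul0mx add0r. Qed.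

End BlockTriangular.

Section Tensor.
Variable R : pzRingType.

Lemma tensmx11 m n : (1%:M : 'M[R]_m) *t (1%:M : 'M[R]_n) = 1%:M.
Proof.
apply/matrixP=> i j.
case: (mxtens_indexP i)=> i0 i1; case: (mxtens_indexP j)=> j0 j1.
rewrite tensmxE !mxE (can_eq (@mxtens_indexK m n)) xpair_eqE.
by case: (i0 == j0); case: (i1 == j1); rewrite ?mul1r ?mul0r.
Qed.

End Tensor.

Section TensorUnit.
Variable R : comUnitRingType.

Lemma tensmx_mulmxV m n (A : 'M[R]_m) (B : 'M[R]_n) :
  A \in unitmx -> B \in unitmx -> (A *t B) *m (invmx A *t invmx B) = 1%:M.
Proof. by move=> uA uB; rewrite tensmx_mul !mulmxV // tensmx11. Qed.

Lemma unitmx_tens m n (A : 'M[R]_m) (B : 'M[R]_n) :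
  A \in unitmx -> B \in unitmx -> A *t B \in unitmx.
Proof. by move=> uA uB; case: (mulmx1_unit (tensmx_mulmxV uA uB)). Qed.

Lemma invmx_tens m n (A : 'M[R]_m) (B : 'M[R]_n) :
  A \in unitmx -> B \in unitmx -> invmx (A *t B) = invmx A *t invmx B.
Proof. by move=> uA uB; apply/mulmx1_invmx/tensmx_mulmxV. Qed.

End TensorUnit.

Section PartialQTrace.
Variables (R : comUnitRingType) (n : nat) (K F : 'M[R]_n) (c q : R).
Hypotheses (K_unit : K \in unitmx) (q_unit : q \is a GRing.unit).
Hypothesis FK : F *m K = q *: (K *m F).

Local Notation L := (block_mx K (c *: F) 0 (invmx K)).

Lemma invmx_upper_lax : invmx L = block_mx (invmx K) (- (c * q) *: F) 0 K.
Proof.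
apply: mulmx1_invmx; rewrite mulmx_block !mulmx0 !mul0mx !addr0 !add0r.
rewrite mulmxV // mulVmx // -scalemxAr -scalemxAl FK scalerA scaleNr addNr.
by rewrite -scalar_mx_block.
Qed.

Lemma partial_qtrace_conj (Z : 'M[R]_(n + n)) :
  comm_mx (block_mx K 0 0 K) Z -> comm_mx (block_mx F 0 0 F) Z ->
  let T := L *m Z *m invmx L *m block_mx q%:M 0 0 q^-1%:M in
  ulsubmx T + drsubmx T = q *: ulsubmx Z + q^-1 *: drsubmx Z.
Proof.
rewrite -[Z]submxK.
move=> /comm_mx_block_diag[Ka _ Kd Ke] /comm_mx_block_diag[_ _ Fd _] T.
have K'F : invmx K *m F = q *: (F *m invmx K).
  by rewrite -{1}(mulmxK K_unit F) FK -scalemxAl -scalemxAr -mulmxA mulKmx.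
have K'd := comm_mx_invmx K_unit Kd.
rewrite /T invmx_upper_lax !mulmx_block.
rewrite !mulmx0 !mul0mx ?addr0 ?add0r !block_mxKul !block_mxKdr.
rewrite !mul_mx_scalar mulmxDl Ka mulmxK // -!scalemxAl Fd.
rewrite -scalemxAr K'd -[_ *m invmx K *m F]mulmxA K'F -scalemxAr mulmxA.
rewrite (comm_mx_invmx K_unit Ke) mulmxKV //.
rewrite !scalerDr !scalerA addrACA.
have -> : q^-1 * - (c * q) * q = - (q * c).
  by rewrite mulrN mulNr mulrCA mulVr // mulr1 mulrC.
by rewrite scaleNr addrA subrK.
Qed.

End PartialQTrace.

Section SpinRepresentation.
Variables (C : numClosedFieldType) (p : C) (n : nat).
Hypothesis p_neq0 : p != 0.

Lemma spinK_diag :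
  spinK p n = diag_mx (\row_(i < n.+1) p ^ (n%:Z - 2 * (i : nat)%:Z)).
Proof. by apply/matrixP=> i j; rewrite !mxE mulr_natl. Qed.

Lemma unitmx_spinK : spinK p n \in unitmx.
Proof.
rewrite spinK_diag unitmxE det_diag unitfE.
by apply/prodf_neq0=> i _; rewrite mxE expfz_neq0.
Qed.

Lemma spinF_spinK : spinF C n *m spinK p n = qpar p *: (spinK p n *m spinF C n).
Proof.
rewrite spinK_diag mul_mx_diag mul_diag_mx; apply/matrixP=> i j; rewrite !mxE.
case: eqP => [-> | _]; last by rewrite !(mul0r, mulr0).
rewrite mul1r mulr1 /qpar -[p ^+ 2]/(p ^ 2%:Z) -expfzDr //.
by congr (p ^ _); lia.
Qed.

End SpinRepresentation.

Section ThreeSites.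
Variables (C : numClosedFieldType) (n1 n2 n3 : nat).

Lemma comm_on12 (X : 'M[C]_n1.+1) (Y : 'M[C]_n2.+1) :
  comm_mx (on1 n2 n3 X) (on2 n1 n3 Y).
Proof. by rewrite /comm_mx /on1 /on2 !tensmx_mul !mulmx1 !mul1mx. Qed.

Lemma comm_on13 (X : 'M[C]_n1.+1) (Y : 'M[C]_n3.+1) :
  comm_mx (on1 n2 n3 X) (on3 n1 n2 Y).
Proof. by rewrite /comm_mx /on1 /on3 !tensmx_mul !mulmx1 !mul1mx. Qed.

Lemma comm_on23 (X : 'M[C]_n2.+1) (Y : 'M[C]_n3.+1) :
  comm_mx (on2 n1 n3 X) (on3 n1 n2 Y).
Proof. by rewrite /comm_mx /on2 /on3 !tensmx_mul !mulmx1 !mul1mx. Qed.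

Lemma unitmx_on1 (X : 'M[C]_n1.+1) : X \in unitmx -> on1 n2 n3 X \in unitmx.
Proof. by move=> uX; rewrite /on1 !unitmx_tens ?unitmx1. Qed.

Lemma unitmx_on2 (X : 'M[C]_n2.+1) : X \in unitmx -> on2 n1 n3 X \in unitmx.
Proof. by move=> uX; rewrite /on2 !unitmx_tens ?unitmx1. Qed.

Lemma unitmx_on3 (X : 'M[C]_n3.+1) : X \in unitmx -> on3 n1 n2 X \in unitmx.
Proof. by move=> uX; rewrite /on3 !unitmx_tens ?unitmx1. Qed.

Lemma invmx_on2 (X : 'M[C]_n2.+1) : X \in unitmx ->
  invmx (on2 n1 n3 X) = on2 n1 n3 (invmx X).
Proof. by move=> uX; rewrite /on2 !invmx_tens ?unitmx_tens ?unitmx1 ?invmx1. Qed.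

Lemma invmx_on3 (X : 'M[C]_n3.+1) : X \in unitmx ->
  invmx (on3 n1 n2 X) = on3 n1 n2 (invmx X).
Proof. by move=> uX; rewrite /on3 !invmx_tens ?unitmx_tens ?unitmx1 ?invmx1. Qed.

End ThreeSites.

Section Monodromy.
Variables (C : numClosedFieldType) (p : C) (n1 n2 n3 : nat).
Hypothesis p_neq0 : p != 0.
Local Notation Lp := (Lplus p n1 n2 n3).
Local Notation Lm := (Lminus p n1 n2 n3).
Local Notation c := ((qpar p - (qpar p)^-1) / p).

Definition monodromy23 := Lp 2 *m Lp 3 *m Lm 3 *m Lm 2.

Lemma unitmx_K i : K_ p n1 n2 n3 i \in unitmx.
Proof.
rewrite /K_; do 2?case: ifP => _;
  [apply: unitmx_on1 | apply: unitmx_on2 | apply: unitmx_on3]; exact: unitmx_spinK.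
Qed.

Lemma invmx_K2 : invmx (K_ p n1 n2 n3 2) = on2 n1 n3 (invmx (spinK p n2)).
Proof. by rewrite invmx_on2 // unitmx_spinK. Qed.

Lemma invmx_K3 : invmx (K_ p n1 n2 n3 3) = on3 n1 n2 (invmx (spinK p n3)).
Proof. by rewrite invmx_on3 // unitmx_spinK. Qed.

Lemma monodromy23E : monodromy23 = (Lp 2 *m Lp 3) *m (Lm 3 *m Lm 2).
Proof. by rewrite /monodromy23 !mulmxA. Qed.

Lemma ulsubmx_monodromy23 :
  ulsubmx monodromy23 = K23 p n1 n2 n3 *m K23 p n1 n2 n3
                        + c ^+ 2 *: (F23 p n1 n2 n3 *m E23 p n1 n2 n3).
Proof.
rewrite monodromy23E /Lplus /Lminus mulmx_block_upper mulmx_block_lower.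
rewrite ulsubmx_upper_lower /K23 /F23 /E23 invmx_K3 /K_ /E_ /F_ /=.
set K2 := on2 n1 n3 (spinK p n2); set K3 := on3 n1 n2 (spinK p n3).
set K3' := on3 n1 n2 (invmx (spinK p n3)).
set E2 := on2 n1 n3 (spinE p n2); set E3 := on3 n1 n2 (spinE p n3).
set F2 := on2 n1 n3 (spinF C n2); set F3 := on3 n1 n2 (spinF C n3).
rewrite -!scalemxAl -!scalemxAr -!scalerDr.
rewrite -[K3 *m K2](comm_on23 _ _) -[E3 *m K2](comm_on23 _ _).
rewrite -[K3' *m E2](comm_on23 _ _) -scalemxAl -scalemxAr scalerA -expr2.
by rewrite [K2 *m F3 + _]addrC [K2 *m E3 + _]addrC.
Qed.

Lemma drsubmx_monodromy23 :
  drsubmx monodromy23 = invmx (K23 p n1 n2 n3 *m K23 p n1 n2 n3).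
Proof.
rewrite monodromy23E /Lplus /Lminus mulmx_block_upper mulmx_block_lower.
rewrite drsubmx_upper_lower /K23 !invmxM ?unitmx_mul ?unitmx_K //.
by rewrite invmx_K2 invmx_K3 /K_ /= comm_on23.
Qed.

Lemma comm_site1_monodromy23 (X : 'M[C]_n1.+1) :
  comm_mx (block_mx (on1 n2 n3 X) 0 0 (on1 n2 n3 X)) monodromy23.
Proof.
rewrite /monodromy23 /Lplus /Lminus invmx_K2 invmx_K3 /K_ /E_ /F_ /=.
do ?apply: comm_mxM; apply/comm_mx_block_diag; split; try apply: comm_mxZ;
  by [exact: comm_on12 | exact: comm_on13 | exact: comm_mx0].
Qed.

Lemma spinF_spinK_site1 :
  F_ C n1 n2 n3 1 *m K_ p n1 n2 n3 1
  = qpar p *: (K_ p n1 n2 n3 1 *m F_ C n1 n2 n3 1).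
Proof.
rewrite /K_ /F_ /= /on1 !tensmx_mul !mulmx1 spinF_spinK //.
by apply/matrixP=> i j; rewrite !mxE !mulrA.
Qed.

Lemma qpar_lax_coef : qpar p * c ^+ 2 = (qpar p - (qpar p)^-1) ^+ 2.
Proof. by rewrite expr_div_n mulrC divfK // expf_neq0. Qed.

End Monodromy.

Theorem corollaryB2 (C : numClosedFieldType) (p : C) (n1 n2 n3 : nat) :
  p != 0 ->
  (forall k : nat, (0 < k)%N -> (p ^+ 2) ^+ k != 1) ->
  Q23 p n1 n2 n3 =
  Tr_a (Lplus p n1 n2 n3 1 *m Lplus p n1 n2 n3 2 *m Lplus p n1 n2 n3 3
        *m Lminus p n1 n2 n3 3 *m Lminus p n1 n2 n3 2
        *m invmx (Lplus p n1 n2 n3 1) *m Ma p n1 n2 n3).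
Proof.
(* only q != 0 is used: the identity holds at roots of unity as well *)
move=> p_neq0 _.
have q_unit : qpar p \is a GRing.unit by rewrite unitfE expf_neq0.
have site1 := @comm_site1_monodromy23 C p n1 n2 n3 p_neq0.
have := partial_qtrace_conj ((qpar p - (qpar p)^-1) / p) (unitmx_K n1 n2 n3 p_neq0 1)
  q_unit (spinF_spinK_site1 n1 n2 n3 p_neq0) (site1 (spinK p n1)) (site1 (spinF C n1)).
rewrite {1 2}/monodromy23 !mulmxA ulsubmx_monodromy23 // drsubmx_monodromy23 // => trace.
rewrite /Tr_a /Ma trace /Q23 scalerDr scalerA qpar_lax_coef //.
by congr (_ + _); rewrite addrC.
Qed.
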